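(* Let $f\in C_p(\mathbb{R})$ with $f(z)\ge0$ for all $z\in[0,1]$. Then $$H_tf(x)=\min_{z\in[0,1]}q_f(t,x;z)\quad\text{for all }(t,x)\in(0,\infty)\times[0,1].$$
   Context: $C_p(\mathbb{R})$ denotes the set of all continuous functions $f:\mathbb{R}\to\mathbb{R}$ periodic with period $1$ with $f(0)=0$. For such $f$, $q_f(t,x;z)=f(z)+\frac{1}{2t}(x-z)^2$ for $(t,x,z)\in(0,\infty)\times\mathbb{R}\times\mathbb{R}$, and $H_tf(x)=\inf_{z\in\mathbb{R}}q_f(t,x;z)$. *)

From HB Require Import structures.
From mathcomp Require Import all_boot all_order all_algebra.
From mathcomp Require Import all_classical all_reals all_analysis.
Set Implicit Arguments. Unset Strict Implicit. Unset Printing Implicit Defensive.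
Import Order.TTheory GRing.Theory Num.Theory.
Import numFieldNormedType.Exports.
Local Open Scope classical_set_scope.
Local Open Scope ring_scope.

Definition Cp (R : realType) (f : R -> R) : Prop :=
  continuous f /\ (forall x : R, f (x + 1) = f x) /\ f 0 = 0.

Definition qf (R : realType) (f : R -> R) (t x z : R) : R :=
  f z + (x - z) ^+ 2 / (2 * t).

Definition Ht (R : realType) (f : R -> R) (t x : R) : R :=
  inf [set qf f t x z | z in [set: R]].

From HB Require Import structures.
From mathcomp Require Import all_boot all_order all_algebra.
From mathcomp Require Import all_classical all_reals all_analysis.
From mathcomp Require Import lra.
Set Implicit Arguments.
Unset Strict Implicit.
Import Order.TTheory GRing.Theory Num.Theory.
Import numFieldNormedType.Exports.
Local Open Scope classical_set_scope.
Local Open Scope ring_scope.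

(* By periodicity f vanishes at both ends of [0, 1] and is nonnegative
   everywhere, while the quadratic penalty in q_f(t, x; .) only grows when z
   leaves [0, 1] for x in [0, 1].  So clamping z to [0, 1] never increases
   q_f(t, x; z), and the minimum of the continuous function q_f(t, x; .) on
   the compact interval [0, 1] is a global minimum, i.e. equals the infimum. *)

Lemma periodicz (U V : zmodType) (f : U -> V) (T : U) :
  periodic f T -> forall (m : int) (a : U), f (a + T *~ m) = f a.
Proof.
move=> fT [] n a; first exact: periodicn.
rewrite NegzE mulrNz -pmulrn.
by rewrite -[in RHS](subrK (T *+ n.+1) a) periodicn.
Qed.

Lemma periodic1_ge0 (R : realType) (f : R -> R) :
  periodic f 1 -> {in `[0, 1], forall z, 0 <= f z} -> forall z, 0 <= f z.
Proof.
move=> f1 f01 z; rewrite -(subrK (Num.floor z)%:~R z) periodicz //.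
apply: f01; rewrite in_itv /= subr_ge0 floor_le /=.
by rewrite lerBlDl ltW // -[1]/(1%:~R) -intrD floorD1_gt.
Qed.

Section QuadraticPenalty.
Variables (R : realType) (f : R -> R) (t x : R).

Lemma qf_continuous : continuous f -> continuous (qf f t x).
Proof.
move=> cf z.
apply: (@continuousD _ _ _ f (fun z => (x - z) ^+ 2 / (2 * t))); first exact: cf.
apply: (@continuousM _ _ (fun z => (x - z) ^+ 2)); last exact: cst_continuous.
apply: (@continuous_comp _ _ _ (fun z => x - z) (fun y => y ^+ 2)).
  by apply: continuousB; [exact: cst_continuous | exact: cvg_id].
exact: exprn_continuous.
Qed.

Lemma qf_le_farther (a z : R) : 0 < t -> f a <= f z -> `|x - a| <= `|x - z| ->
  qf f t x a <= qf f t x z.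
Proof.
move=> t_gt0 faz xaz; rewrite /qf lerD // ler_pM2r ?invr_gt0 ?mulr_gt0 //.
by rewrite -!(real_normK (num_real (x - _))) lerXn2r ?nnegrE.
Qed.

Lemma qf_clamp01_le : 0 < t -> (forall z, 0 <= f z) -> f 0 = 0 -> f 1 = 0 ->
  x \in `[0, 1] -> forall z, exists2 w, w \in `[0, 1] & qf f t x w <= qf f t x z.
Proof.
move=> t_gt0 f_ge0 f0 f1; rewrite in_itv /= => /andP[x_ge0 x_le1] z.
have [z_lt0 | z_ge0] := ltrP z 0.
  exists 0; first by rewrite in_itv /= lexx ler01.
  by apply: qf_le_farther; rewrite ?f0 // !ger0_norm; lra.
have [z_gt1 | z_le1] := ltrP 1 z.
  exists 1; first by rewrite in_itv /= lexx ler01.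
  by apply: qf_le_farther; rewrite ?f1 // !ler0_norm; lra.
by exists z; rewrite ?in_itv /= ?z_ge0.
Qed.

End QuadraticPenalty.

Lemma inf_range_min (T : Type) (R : realType) (g : T -> R) (z0 : T) :
  (forall z, g z0 <= g z) -> inf (range g) = g z0.
Proof.
move=> gmin; apply/eqP; rewrite eq_le; apply/andP; split.
  by apply: ge_inf; [exists (g z0) => _ [z _ <-] | exists z0].
by apply: lb_le_inf; [exists (g z0), z0 | move=> _ [z _ <-]].
Qed.

Theorem lemma4p1 (R : realType) (f : R -> R) :
  Cp f ->
  (forall z : R, z \in `[0, 1] -> 0 <= f z) ->
  forall t x : R, 0 < t -> x \in `[0, 1] ->
    exists2 z0 : R, z0 \in `[0, 1] &
      (forall z : R, z \in `[0, 1] -> qf f t x z0 <= qf f t x z) /\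
      Ht f t x = qf f t x z0.
Proof.
move=> [cf [f_per f0]] f01 t x t_gt0 x01.
have f_ge0 := periodic1_ge0 f_per f01.
have f1 : f 1 = 0 by rewrite -[1]add0r f_per.
have qcont : {within `[0, 1], continuous (qf f t x)}.
  exact/continuous_subspaceT/qf_continuous.
have [z0 z0_01 z0_min] := EVT_min ler01 qcont.
have z0_global : forall z, qf f t x z0 <= qf f t x z.
  move=> z; have [w w01 qw_le] := qf_clamp01_le t_gt0 f_ge0 f0 f1 x01 z.
  exact: le_trans (z0_min w w01) qw_le.
by exists z0 => //; split => //; apply: inf_range_min.
Qed.
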